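(* Let $\Sigma$ be a functor with a free monad $(\Sigma^*,\eta,\mu)$ such that $\Sigma^*X$ is countable whenever $X$ is countable. Let $(B,\sqsubseteq)$ be an ordered functor with a cofree comonad, such that $B$ preserves weak pullbacks and the restriction of $(B,\sqsubseteq)$ to countable sets is $\mathsf{DCPO}_\bot$-ordered. Let $\rho\colon\Sigma B^\infty\Rightarrow B\Sigma^*$ be a monotone biGSOS specification. Then for every coalgebra $c\colon X\to BX$ with $X$ countable the least fixed point $c^\sharp$ of $\varphi_c$ exists, and setting $\overline{\Sigma^*}_c(X,c)=(\Sigma^*X,c^\sharp)$, $\overline{\Sigma^*}_c(h)=\Sigma^*h$, together with the components of $\eta$ and $\mu$ at countable sets, defines a monad on $\mathsf{Coalg}_c(B)$ that lifts the restriction $(\Sigma^*_c,\eta^c,\mu^c)$ of $(\Sigma^*,\eta,\mu)$ to $\mathsf{cSet}$.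
   Context: $\mathsf{cSet}$ is the full subcategory of $\mathsf{Set}$ on countable sets; $\mathsf{Coalg}_c(B)$ is the full subcategory of $B$-coalgebras with countable carrier (morphisms: $h$ with $Bh\circ c=d\circ h$), with forgetful functor $U\colon\mathsf{Coalg}_c(B)\to\mathsf{cSet}$. A monad $(\overline T,\overline\eta,\overline\mu)$ on $\mathsf{Coalg}_c(B)$ lifts a monad $(T,\eta,\mu)$ on $\mathsf{cSet}$ if $U\overline T=TU$, $U\overline\eta=\eta U$, $U\overline\mu=\mu U$. An ordered functor $(B,\sqsubseteq)$ is a functor $B\colon\mathsf{Set}\to\mathsf{Set}$ with a preorder $\sqsubseteq_{BX}$ on each $BX$ such that each $Bf$ is monotone. Its restriction to countable sets is $\mathsf{DCPO}_\bot$-ordered if for every countable $X$, $\sqsubseteq_{BX}$ is a partial order making $BX$ a pointed DCPO, and for every function $f$ between countable sets, $Bf$ preserves suprema of all directed subsets including the empty one. Relation lifting: for $R\subseteq X\times Y$ with projections $\pi_1,\pi_2$ and any functor $F$, $\mathsf{Rel}(F)(R)=\{(b,c)\in FX\times FY\mid\exists d\in FR.\ F\pi_1(d)=b,\ F\pi_2(d)=c\}$; $\mathsf{Rel}_{\sqsubseteq}(B)(R)=\{(b,c)\mid\exists b',c'.\ b\sqsubseteq b',\ (b',c')\in\mathsf{Rel}(B)(R),\ c'\sqsubseteq c\}$. For coalgebras $f\colon X\to BX$, $g\colon Y\to BY$, $R\subseteq X\times Y$ is a simulation if $(f(x),g(y))\in\mathsf{Rel}_{\sqsubseteq}(B)(R)$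 for all $(x,y)\in R$; similarity is the greatest simulation. Cofree comonad: for each set $X$, $\theta_X\colon B^\infty X\to BB^\infty X$, $\epsilon_X\colon B^\infty X\to X$ with $\langle\theta_X,\epsilon_X\rangle$ a final $B(-)\times X$-coalgebra; $f^\infty\colon X\to B^\infty X$ is the unique coalgebra morphism from $\langle f,\mathrm{id}_X\rangle$ to it. The functor $B(-)\times X$ is ordered by $(b,x)\,\widetilde\sqsubseteq\,(c,y)$ iff $b\sqsubseteq c$ and $x=y$; $\lesssim_{B^\infty X}$ is the similarity of $\langle\theta_X,\epsilon_X\rangle$ with itself w.r.t. this order. Free monad: for each set $X$, $\iota_X\colon\Sigma\Sigma^*X\to\Sigma^*X$, $\eta_X\colon X\to\Sigma^*X$ with $[\iota_X,\eta_X]$ an initial algebra for $\Sigma(-)+X$; $\mu_X$ is the unique map with $\mu_X\circ\eta_{\Sigma^*X}=\mathrm{id}$ and $\mu_X\circ\iota_{\Sigma^*X}=\iota_X\circ\Sigma\mu_X$. A biGSOS specification is a natural transformation $\rho\colon\Sigma B^\infty\Rightarrow B\Sigma^*$; it is monotone if for every set $X$ and all $u,v\in\Sigma B^\infty X$ with $(u,v)\in\mathsf{Rel}(\Sigma)(\lesssim_{B^\infty X})$, $\rho_X(u)\sqsubseteq_{B\Sigma^*X}\rho_X(v)$. For $c\colon X\to BX$, $\varphi_c(f)=[\,B\mu_X\circ\rho_{\Sigma^*X}\circ\Sigma f^\infty,\ B\eta_X\circ c\,]\circ[\iota_X,\eta_X]^{-1}$ for $f\colon\Sigma^*X\to B\Sigma^*X$,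 ordered pointwise. *)

Record Functor := {
  fobj :> Type -> Type;
  fmap : forall A C : Type, (A -> C) -> fobj A -> fobj C;
  fmap_id : forall A (x : fobj A), fmap A A (fun a => a) x = x;
  fmap_comp : forall A C D (f : A -> C) (g : C -> D) (x : fobj A),
      fmap A D (fun a => g (f a)) x = fmap C D g (fmap A C f x)
}.
Arguments fmap _ {A C} _ _.

Definition countable (X : Type) : Prop :=
  exists f : X -> nat, forall x y, f x = f y -> x = y.

Definition relT {X Y : Type} (R : X -> Y -> Prop) : Type :=
  { p : X * Y | R (fst p) (snd p) }.

Definition RelG (F : Type -> Type) (fm : forall A C : Type, (A -> C) -> F A -> F C)
  {X Y : Type} (R : X -> Y -> Prop) (b : F X) (c : F Y) : Prop :=
  exists d : F (relT R),
    fm (relT R) X (fun p => fst (proj1_sig p)) d = b /\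
    fm (relT R) Y (fun p => snd (proj1_sig p)) d = c.

Definition Rel (F : Functor) {X Y : Type} (R : X -> Y -> Prop) (b : F X) (c : F Y) : Prop :=
  RelG F (@fmap F) R b c.

Definition RelLe (F : Type -> Type) (fm : forall A C : Type, (A -> C) -> F A -> F C)
  (le : forall A : Type, F A -> F A -> Prop)
  {X Y : Type} (R : X -> Y -> Prop) (b : F X) (c : F Y) : Prop :=
  exists (b' : F X) (c' : F Y), le X b b' /\ RelG F fm R b' c' /\ le Y c' c.

Definition simulation (F : Type -> Type) (fm : forall A C : Type, (A -> C) -> F A -> F C)
  (le : forall A : Type, F A -> F A -> Prop)
  {X Y : Type} (f : X -> F X) (g : Y -> F Y) (R : X -> Y -> Prop) : Prop :=
  forall x y, R x y -> RelLe F fm le R (f x) (g y).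

Definition similarity (F : Type -> Type) (fm : forall A C : Type, (A -> C) -> F A -> F C)
  (le : forall A : Type, F A -> F A -> Prop)
  {X Y : Type} (f : X -> F X) (g : Y -> F Y) (x : X) (y : Y) : Prop :=
  exists R : X -> Y -> Prop, simulation F fm le f g R /\ R x y.

Record OrderedFunctor := {
  ofun :> Functor;
  ole : forall X : Type, ofun X -> ofun X -> Prop;
  ole_refl : forall X (b : ofun X), ole X b b;
  ole_trans : forall X (a b c : ofun X), ole X a b -> ole X b c -> ole X a c;
  fmap_mono : forall X Y (f : X -> Y) (b c : ofun X),
      ole X b c -> ole Y (fmap ofun f b) (fmap ofun f c)
}.
Arguments ole _ {X} _ _.

Definition directed {T : Type} (le : T -> T -> Prop) (D : T -> Prop) : Prop :=
  (exists x, D x) /\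
  (forall x y, D x -> D y -> exists z, D z /\ le x z /\ le y z).

Definition is_sup {T : Type} (le : T -> T -> Prop) (D : T -> Prop) (s : T) : Prop :=
  (forall x, D x -> le x s) /\ (forall u, (forall x, D x -> le x u) -> le s u).

Definition is_bot {T : Type} (le : T -> T -> Prop) (b : T) : Prop :=
  forall x, le b x.

Definition DCPObot_on_countable (B : OrderedFunctor) : Prop :=
  (forall X : Type, countable X ->
     (forall b c : B X, ole B b c -> ole B c b -> b = c) /\
     (exists bot : B X, is_bot (ole B) bot) /\
     (forall D : B X -> Prop, directed (ole B) D -> exists s, is_sup (ole B) D s)) /\
  (forall (X Y : Type) (f : X -> Y), countable X -> countable Y ->
     (forall (D : B X -> Prop) (s : B X), directed (ole B) D -> is_sup (ole B) D s ->
        is_sup (ole B) (fun y => exists x, D x /\ y = fmap B f x) (fmap B f s)) /\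
     (* preservation of the supremum of the empty set, i.e. of the bottom *)
     (forall s : B X, is_sup (ole B) (fun _ => False) s ->
        is_sup (ole B) (fun _ => False) (fmap B f s))).

Definition weak_pullback {P X Y Z : Type} (p1 : P -> X) (p2 : P -> Y)
  (f : X -> Z) (g : Y -> Z) : Prop :=
  (forall p, f (p1 p) = g (p2 p)) /\
  (forall (Q : Type) (q1 : Q -> X) (q2 : Q -> Y),
     (forall q, f (q1 q) = g (q2 q)) ->
     exists h : Q -> P, (forall q, p1 (h q) = q1 q) /\ (forall q, p2 (h q) = q2 q)).

Definition preserves_weak_pullbacks (F : Functor) : Prop :=
  forall (P X Y Z : Type) (p1 : P -> X) (p2 : P -> Y) (f : X -> Z) (g : Y -> Z),
    weak_pullback p1 p2 f g ->
    weak_pullback (fmap F p1) (fmap F p2) (fmap F f) (fmap F g).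

(** * Free monad: [iota_X, eta_X] is an initial Σ(-)+X algebra
    (with a chosen unique mediating map [fm_fold]). *)
Record FreeMonad (S : Functor) := {
  fm_obj :> Type -> Type;
  fm_iota : forall X : Type, S (fm_obj X) -> fm_obj X;
  fm_eta : forall X : Type, X -> fm_obj X;
  fm_fold : forall X A : Type, (S A -> A) -> (X -> A) -> fm_obj X -> A;
  fm_fold_iota : forall X A (alg : S A -> A) (f : X -> A) (s : S (fm_obj X)),
      fm_fold X A alg f (fm_iota X s) = alg (fmap S (fm_fold X A alg f) s);
  fm_fold_eta : forall X A (alg : S A -> A) (f : X -> A) (x : X),
      fm_fold X A alg f (fm_eta X x) = f x;
  fm_fold_unique : forall X A (alg : S A -> A) (f : X -> A) (h : fm_obj X -> A),
      (forall s, h (fm_iota X s) = alg (fmap S h s)) ->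
      (forall x, h (fm_eta X x) = f x) ->
      forall t, h t = fm_fold X A alg f t
}.
Arguments fm_iota {S} _ {X} _.
Arguments fm_eta {S} _ {X} _.
Arguments fm_fold {S} _ {X A} _ _ _.

Definition Tmap {S : Functor} (T : FreeMonad S) {X Y : Type} (h : X -> Y) : T X -> T Y :=
  fm_fold T (fm_iota T) (fun x => fm_eta T (h x)).

Definition Tmu {S : Functor} (T : FreeMonad S) (X : Type) : T (T X) -> T X :=
  fm_fold T (fm_iota T) (fun t => t).

(* [iota_X, eta_X]^{-1} : Σ*X -> ΣΣ*X + X (Lambek) *)
Definition Tunfold1 {S : Functor} (T : FreeMonad S) (X : Type) : T X -> S (T X) + X :=
  fm_fold T
    (fun s => inl (fmap S (fun e : S (T X) + X =>
                              match e with inl s' => fm_iota T s' | inr x => fm_eta T x end) s))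
    (fun x => inr x).

(** * Cofree comonad: <theta_X, eps_X> is a final B(-)×X coalgebra
    (with a chosen unique mediating map [cf_unfold]). *)
Record CofreeComonad (B : Functor) := {
  cf_obj :> Type -> Type;
  cf_theta : forall X : Type, cf_obj X -> B (cf_obj X);
  cf_eps : forall X : Type, cf_obj X -> X;
  cf_unfold : forall X A : Type, (A -> B A * X) -> A -> cf_obj X;
  cf_unfold_theta : forall X A (g : A -> B A * X) (a : A),
      cf_theta X (cf_unfold X A g a) = fmap B (cf_unfold X A g) (fst (g a));
  cf_unfold_eps : forall X A (g : A -> B A * X) (a : A),
      cf_eps X (cf_unfold X A g a) = snd (g a);
  cf_unfold_unique : forall X A (g : A -> B A * X) (h : A -> cf_obj X),
      (forall a, cf_theta X (h a) = fmap B h (fst (g a))) ->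
      (forall a, cf_eps X (h a) = snd (g a)) ->
      forall a, h a = cf_unfold X A g a
}.
Arguments cf_theta {B} _ {X} _.
Arguments cf_eps {B} _ {X} _.
Arguments cf_unfold {B} _ {X A} _ _.

Definition Cmap {B : Functor} (C : CofreeComonad B) {X Y : Type} (h : X -> Y) : C X -> C Y :=
  cf_unfold C (fun t => (cf_theta C t, h (cf_eps C t))).

Definition Cinf {B : Functor} (C : CofreeComonad B) {X : Type} (f : X -> B X) : X -> C X :=
  cf_unfold C (fun x => (f x, x)).

Definition prodmap (B : Functor) (X : Type) (A A' : Type) (g : A -> A') (p : B A * X) : B A' * X :=
  (fmap B g (fst p), snd p).

Definition prodle (B : OrderedFunctor) (X : Type) (A : Type) (p q : B A * X) : Prop :=
  ole B (fst p) (fst q) /\ snd p = snd q.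

Definition Csim {B : OrderedFunctor} (C : CofreeComonad B) (X : Type) : C X -> C X -> Prop :=
  similarity (fun A => B A * X)%type (prodmap B X) (prodle B X)
    (fun t : C X => (cf_theta C t, cf_eps C t))
    (fun t : C X => (cf_theta C t, cf_eps C t)).

Definition biGSOS_natural (S : Functor) (T : FreeMonad S) (B : Functor) (C : CofreeComonad B)
  (rho : forall X : Type, S (C X) -> B (T X)) : Prop :=
  forall (X Y : Type) (h : X -> Y) (u : S (C X)),
    rho Y (fmap S (Cmap C h) u) = fmap B (Tmap T h) (rho X u).

Definition biGSOS_monotone (S : Functor) (T : FreeMonad S) (B : OrderedFunctor)
  (C : CofreeComonad B) (rho : forall X : Type, S (C X) -> B (T X)) : Prop :=
  forall (X : Type) (u v : S (C X)),
    Rel S (Csim C X) u v -> ole B (rho X u) (rho X v).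

Definition phi (S : Functor) (T : FreeMonad S) (B : Functor) (C : CofreeComonad B)
  (rho : forall X : Type, S (C X) -> B (T X)) {X : Type} (c : X -> B X)
  (f : T X -> B (T X)) : T X -> B (T X) :=
  fun t => match Tunfold1 T X t with
           | inl s => fmap B (Tmu T X) (rho (T X) (fmap S (Cinf C f) s))
           | inr x => fmap B (fm_eta T) (c x)
           end.

Definition is_lfp (S : Functor) (T : FreeMonad S) (B : OrderedFunctor) (C : CofreeComonad B)
  (rho : forall X : Type, S (C X) -> B (T X)) {X : Type} (c : X -> B X)
  (s : T X -> B (T X)) : Prop :=
  (forall t, phi S T B C rho c s t = s t) /\
  (forall g : T X -> B (T X), (forall t, phi S T B C rho c g t = g t) ->
     forall t, ole B (s t) (g t)).

Definition coalg_hom (B : Functor) {X Y : Type} (c : X -> B X) (d : Y -> B Y) (h : X -> Y) : Prop :=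
  forall x, fmap B h (c x) = d (h x).

From Stdlib Require Import ClassicalEpsilon FunctionalExtensionality.

(* The least fixed point c^# exists by Pataraia's theorem: phi_c is a monotone
   self-map of the pointed dcpo of maps Σ*X -> BΣ*X, monotone because pointwise
   comparable f <= g have similar f^∞ and g^∞, and ρ is monotone. The monad laws
   are those of Σ*, so it remains that Σ*h, η and μ are coalgebra morphisms. Each
   of them is a map k commuting with ι and μ that respects the generator clause of
   phi; for such k, both [Bk ∘ c^# <= d^# ∘ k] and [d^# ∘ k <= Bk ∘ c^#] follow by
   fixpoint induction, the first because Bk is strict and continuous, the second
   by a simultaneous induction in the product dcpo. *)

Definition img {A A' : Type} (g : A -> A') (D : A -> Prop) : A' -> Prop :=
  fun y => exists x, D x /\ y = g x.

Lemma directed_img {A A' : Type} (le : A -> A -> Prop) (le' : A' -> A' -> Prop)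
  (g : A -> A') (D : A -> Prop) :
  (forall x y, le x y -> le' (g x) (g y)) -> directed le D -> directed le' (img g D).
Proof.
  intros g_mono [[x0 Dx0] D_dir]. split.
  - exists (g x0), x0. auto.
  - intros _ _ [x [Dx ->]] [y [Dy ->]].
    destruct (D_dir x y Dx Dy) as [z [Dz [le_xz le_yz]]].
    exists (g z). split; [exists z; auto | auto].
Qed.

Record PointedDcpo := {
  dcarrier :> Type;
  dle : dcarrier -> dcarrier -> Prop;
  dle_refl : forall x, dle x x;
  dle_trans : forall x y z, dle x y -> dle y z -> dle x z;
  dbot : dcarrier;
  dbot_le : forall x, dle dbot x;
  dsup : (dcarrier -> Prop) -> dcarrier;
  dsup_spec : forall D, directed dle D -> is_sup dle D (dsup D)
}.
Arguments dle {_} _ _.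
Arguments dbot {_}.
Arguments dsup {_} _.

Lemma dsup_ub (P : PointedDcpo) (D : P -> Prop) x :
  directed dle D -> D x -> dle x (dsup D).
Proof. intros D_dir. exact (proj1 (dsup_spec P D D_dir) x). Qed.

Lemma dsup_least (P : PointedDcpo) (D : P -> Prop) u :
  directed dle D -> (forall x, D x -> dle x u) -> dle (dsup D) u.
Proof. intros D_dir. exact (proj2 (dsup_spec P D D_dir) u). Qed.

Section Pataraia.
Variables (P : PointedDcpo) (F : P -> P) (K : P -> Prop).
Hypothesis F_mono : forall x y, K x -> K y -> dle x y -> dle (F x) (F y).
Hypothesis F_infl : forall x, K x -> dle x (F x).
Hypothesis K_bot : K dbot.
Hypothesis K_F : forall x, K x -> K (F x).
Hypothesis K_sup : forall D, directed dle D -> (forall x, D x -> K x) -> K (dsup D).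

Definition inflationary_monotone_on (h : P -> P) : Prop :=
  (forall x, K x -> K (h x)) /\
  (forall x y, K x -> K y -> dle x y -> dle (h x) (h y)) /\
  (forall x, K x -> dle x (h x)).

Let orbit (x : P) : P -> Prop := fun y => exists h, inflationary_monotone_on h /\ y = h x.

Lemma orbit_directed x : K x -> directed dle (orbit x).
Proof.
  intros Kx. split.
  - exists x, (fun y => y). repeat split; auto using dle_refl.
  - intros _ _ [h1 [[K1 [M1 I1]] ->]] [h2 [[K2 [M2 I2]] ->]].
    exists (h1 (h2 x)). repeat split.
    + exists (fun y => h1 (h2 y)). repeat split; auto.
      intros y Ky. apply (dle_trans _ _ (h2 y)); auto.
    + auto.
    + auto.
Qed.

(* [top], the pointwise supremum of all inflationary monotone maps on K, is the
   greatest such map; as [F \o top] is one too, [F (top x) <= top x]. *)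
Theorem pataraia : exists m, K m /\ dle (F m) m.
Proof.
  pose (top x := dsup (orbit x)).
  assert (K_top : forall x, K x -> K (top x)).
  { intros x Kx. apply K_sup; [exact (orbit_directed x Kx)|].
    intros _ [h [[Kh _] ->]]. auto. }
  assert (top_infl_mono : inflationary_monotone_on top).
  { split; [exact K_top | split].
    - intros x y Kx Ky le_xy. apply dsup_least; [exact (orbit_directed x Kx)|].
      intros _ [h [[Kh [Mh Ih]] ->]]. apply (dle_trans _ _ (h y)); auto.
      apply dsup_ub; [exact (orbit_directed y Ky)|]. exists h. split; [split|]; auto.
    - intros x Kx. apply dsup_ub; [exact (orbit_directed x Kx)|].
      exists (fun y => y). repeat split; auto using dle_refl. }
  exists (top dbot). split; [auto|].
  apply dsup_ub; [exact (orbit_directed _ K_bot)|].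
  exists (fun x => F (top x)). split; [|reflexivity].
  destruct top_infl_mono as [Kt [Mt It]]. repeat split; auto.
  intros x Kx. apply (dle_trans _ _ (top x)); auto.
Qed.

End Pataraia.

Lemma lfp_induction (P : PointedDcpo) (F : P -> P) (Q : P -> Prop) :
  (forall x y, dle x y -> dle (F x) (F y)) ->
  Q dbot -> (forall x, Q x -> Q (F x)) ->
  (forall D, directed dle D -> (forall x, D x -> Q x) -> Q (dsup D)) ->
  exists m, dle (F m) m /\ dle m (F m) /\ Q m /\ (forall g, dle (F g) g -> dle m g).
Proof.
  intros F_mono Q_bot Q_F Q_sup.
  pose (K x := dle x (F x) /\ (forall g, dle (F g) g -> dle x g) /\ Q x).
  assert (K_F : forall x, K x -> K (F x)).
  { intros x [x_infl [x_least Qx]]. split; [|split]; auto.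
    intros g Fg. apply (dle_trans _ _ (F g)); auto. }
  assert (K_sup : forall D, directed dle D -> (forall x, D x -> K x) -> K (dsup D)).
  { intros D D_dir KD. split; [|split].
    - apply dsup_least; auto. intros x Dx. apply (dle_trans _ _ (F x)).
      + apply (proj1 (KD x Dx)).
      + apply F_mono, dsup_ub; auto.
    - intros g Fg. apply dsup_least; auto. intros x Dx. apply (proj1 (proj2 (KD x Dx))), Fg.
    - apply Q_sup; auto. intros x Dx. apply (proj2 (proj2 (KD x Dx))). }
  assert (K_bot : K dbot) by (split; [|split]; auto using dbot_le).
  destruct (pataraia P F K) as [m [[m_infl [m_least Qm]] Fm_le]]; auto.
  - intros x Kx. apply (proj1 Kx).
  - exists m. auto.
Qed.

Definition pointwise_le {A : Type} {P : PointedDcpo} (f g : A -> P) : Prop :=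
  forall a, dle (f a) (g a).

Lemma directed_at {A : Type} {P : PointedDcpo} (D : (A -> P) -> Prop) a :
  directed pointwise_le D -> directed dle (img (fun f => f a) D).
Proof. apply directed_img. auto. Qed.

Definition pointwise_dcpo (A : Type) (P : PointedDcpo) : PointedDcpo.
Proof.
  refine {| dcarrier := A -> P;
            dle := pointwise_le;
            dbot _ := dbot;
            dsup D a := dsup (img (fun f => f a) D) |}.
  - intros f a. apply dle_refl.
  - intros f g h fg gh a. apply (dle_trans _ _ (g a)); auto.
  - intros f a. apply dbot_le.
  - intros D D_dir. split.
    + intros f Df a. apply dsup_ub; [apply directed_at, D_dir|]. exists f. auto.
    + intros u u_ub a. apply dsup_least; [apply directed_at, D_dir|].
      intros _ [f [Df ->]]. apply u_ub, Df.
Defined.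

Lemma pointwise_dsup_least (A : Type) (P : PointedDcpo) (D : pointwise_dcpo A P -> Prop) a u :
  directed dle D -> (forall f, D f -> dle (f a) u) -> dle (dsup D a) u.
Proof.
  intros D_dir D_le. apply dsup_least; [apply directed_at, D_dir|].
  intros _ [f [Df ->]]. auto.
Qed.

Definition prod_le {P1 P2 : PointedDcpo} (p q : P1 * P2) : Prop :=
  dle (fst p) (fst q) /\ dle (snd p) (snd q).

Lemma directed_fst {P1 P2 : PointedDcpo} (D : P1 * P2 -> Prop) :
  directed prod_le D -> directed dle (img fst D).
Proof. apply directed_img. intros ? ? []. auto. Qed.

Lemma directed_snd {P1 P2 : PointedDcpo} (D : P1 * P2 -> Prop) :
  directed prod_le D -> directed dle (img snd D).
Proof. apply directed_img. intros ? ? []. auto. Qed.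

Definition prod_dcpo (P1 P2 : PointedDcpo) : PointedDcpo.
Proof.
  refine {| dcarrier := (P1 * P2)%type;
            dle := prod_le;
            dbot := (dbot, dbot);
            dsup D := (dsup (img fst D), dsup (img snd D)) |}.
  - intros p. split; apply dle_refl.
  - intros p q r [pq1 pq2] [qr1 qr2]. split; eapply dle_trans; eauto.
  - intros p. split; apply dbot_le.
  - intros D D_dir. pose proof (directed_fst D D_dir). pose proof (directed_snd D D_dir). split.
    + intros p Dp. split; apply dsup_ub; auto; exists p; auto.
    + intros u u_ub. split; apply dsup_least; auto; intros _ [p [Dp ->]]; apply (u_ub p Dp).
Defined.

Section ObjectDcpo.
Variables (B : OrderedFunctor) (HD : DCPObot_on_countable B).

Lemma ole_antisym Z (HZ : countable Z) (b c : B Z) : ole B b c -> ole B c b -> b = c.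
Proof. apply (proj1 HD Z HZ). Qed.

Definition obj_bot Z (HZ : countable Z) : B Z :=
  proj1_sig (constructive_indefinite_description _ (proj1 (proj2 (proj1 HD Z HZ)))).

Lemma obj_bot_le Z (HZ : countable Z) : is_bot (ole B) (obj_bot Z HZ).
Proof. exact (proj2_sig (constructive_indefinite_description _ _)). Qed.

Definition obj_sup Z (HZ : countable Z) (D : B Z -> Prop) : B Z :=
  epsilon (inhabits (obj_bot Z HZ)) (is_sup (ole B) D).

Lemma obj_sup_spec Z (HZ : countable Z) D :
  directed (ole B) D -> is_sup (ole B) D (obj_sup Z HZ D).
Proof.
  intros D_dir. unfold obj_sup.
  apply epsilon_spec, (proj2 (proj2 (proj1 HD Z HZ))), D_dir.
Qed.

Definition obj_dcpo Z (HZ : countable Z) : PointedDcpo :=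
  {| dcarrier := B Z; dle := ole B;
     dle_refl := ole_refl B Z; dle_trans := ole_trans B Z;
     dbot := obj_bot Z HZ; dbot_le := obj_bot_le Z HZ;
     dsup := obj_sup Z HZ; dsup_spec := obj_sup_spec Z HZ |}.

Lemma fmap_obj_bot_le Z Z' (HZ : countable Z) (HZ' : countable Z') (k : Z -> Z') u :
  ole B (fmap B k (obj_bot Z HZ)) u.
Proof.
  assert (bot_sup : is_sup (ole B) (fun _ => False) (obj_bot Z HZ)).
  { split; [intros _ []|]. intros v _. apply obj_bot_le. }
  apply (proj2 (proj2 (proj2 HD Z Z' k HZ HZ') _ bot_sup)). intros _ [].
Qed.

Lemma fmap_obj_sup_le Z Z' (HZ : countable Z) (HZ' : countable Z') (k : Z -> Z') D u :
  directed (ole B) D -> (forall b, D b -> ole B (fmap B k b) u) ->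
  ole B (fmap B k (obj_sup Z HZ D)) u.
Proof.
  intros D_dir D_le.
  apply (proj1 (proj2 HD Z Z' k HZ HZ') D _ D_dir (obj_sup_spec Z HZ D D_dir)).
  intros _ [b [Db ->]]. auto.
Qed.

End ObjectDcpo.

Section FreeMonadLaws.
Variables (S : Functor) (T : FreeMonad S).

Lemma fm_fold_ext X A (alg : S A -> A) (f : X -> A) (h1 h2 : T X -> A) :
  (forall s, h1 (fm_iota T s) = alg (fmap S h1 s)) -> (forall x, h1 (fm_eta T x) = f x) ->
  (forall s, h2 (fm_iota T s) = alg (fmap S h2 s)) -> (forall x, h2 (fm_eta T x) = f x) ->
  forall t, h1 t = h2 t.
Proof.
  intros h1_iota h1_eta h2_iota h2_eta t.
  rewrite (fm_fold_unique S T X A alg f h1 h1_iota h1_eta t).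
  rewrite (fm_fold_unique S T X A alg f h2 h2_iota h2_eta t).
  reflexivity.
Qed.

Lemma Tmap_eta X Y (h : X -> Y) x : Tmap T h (fm_eta T x) = fm_eta T (h x).
Proof. apply fm_fold_eta. Qed.

Lemma Tmap_iota X Y (h : X -> Y) s :
  Tmap T h (fm_iota T s) = fm_iota T (fmap S (Tmap T h) s).
Proof. apply fm_fold_iota. Qed.

Lemma Tmu_eta X (t : T X) : Tmu T X (fm_eta T t) = t.
Proof. apply fm_fold_eta. Qed.

Lemma Tmu_iota X s : Tmu T X (fm_iota T s) = fm_iota T (fmap S (Tmu T X) s).
Proof. apply fm_fold_iota. Qed.

Lemma Tmap_id X (t : T X) : Tmap T (fun x : X => x) t = t.
Proof.
  apply (fm_fold_ext X (T X) (fm_iota T) (fm_eta T) (Tmap T (fun x => x)) (fun t => t)).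
  - apply Tmap_iota.
  - apply Tmap_eta.
  - intro s. rewrite fmap_id. reflexivity.
  - reflexivity.
Qed.

Lemma Tmap_comp X Y Z (h : X -> Y) (g : Y -> Z) (t : T X) :
  Tmap T (fun x => g (h x)) t = Tmap T g (Tmap T h t).
Proof.
  apply (fm_fold_ext X (T Z) (fm_iota T) (fun x => fm_eta T (g (h x)))
           (Tmap T (fun x => g (h x))) (fun t => Tmap T g (Tmap T h t))).
  - apply Tmap_iota.
  - apply Tmap_eta.
  - intro s. rewrite !Tmap_iota, <- fmap_comp. reflexivity.
  - intro x. rewrite !Tmap_eta. reflexivity.
Qed.

Lemma Tmu_natural X Y (h : X -> Y) (t : T (T X)) :
  Tmap T h (Tmu T X t) = Tmu T Y (Tmap T (Tmap T h) t).
Proof.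
  apply (fm_fold_ext (T X) (T Y) (fm_iota T) (Tmap T h)
           (fun t => Tmap T h (Tmu T X t)) (fun t => Tmu T Y (Tmap T (Tmap T h) t))).
  - intro s. rewrite Tmu_iota, Tmap_iota, <- fmap_comp. reflexivity.
  - intro t'. rewrite Tmu_eta. reflexivity.
  - intro s. rewrite Tmap_iota, Tmu_iota, <- fmap_comp. reflexivity.
  - intro t'. rewrite Tmap_eta, Tmu_eta. reflexivity.
Qed.

Lemma Tmu_assoc X (t : T (T (T X))) :
  Tmu T X (Tmu T (T X) t) = Tmu T X (Tmap T (Tmu T X) t).
Proof.
  apply (fm_fold_ext (T (T X)) (T X) (fm_iota T) (Tmu T X)
           (fun t => Tmu T X (Tmu T (T X) t)) (fun t => Tmu T X (Tmap T (Tmu T X) t))).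
  - intro s. rewrite !Tmu_iota, <- fmap_comp. reflexivity.
  - intro t'. rewrite Tmu_eta. reflexivity.
  - intro s. rewrite Tmap_iota, Tmu_iota, <- fmap_comp. reflexivity.
  - intro t'. rewrite Tmap_eta, Tmu_eta. reflexivity.
Qed.

Lemma Tmu_Tmap_eta X (t : T X) : Tmu T X (Tmap T (fm_eta T) t) = t.
Proof.
  apply (fm_fold_ext X (T X) (fm_iota T) (fm_eta T)
           (fun t => Tmu T X (Tmap T (fm_eta T) t)) (fun t => t)).
  - intro s. rewrite Tmap_iota, Tmu_iota, <- fmap_comp. reflexivity.
  - intro x. rewrite Tmap_eta, Tmu_eta. reflexivity.
  - intro s. rewrite fmap_id. reflexivity.
  - reflexivity.
Qed.

Definition Tfold1 X (e : S (T X) + X) : T X :=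
  match e with inl s => fm_iota T s | inr x => fm_eta T x end.

Lemma Tfold1_unfold1 X (t : T X) : Tfold1 X (Tunfold1 T X t) = t.
Proof.
  apply (fm_fold_ext X (T X) (fm_iota T) (fm_eta T)
           (fun t => Tfold1 X (Tunfold1 T X t)) (fun t => t)).
  - intro s. unfold Tunfold1 at 1. rewrite fm_fold_iota, <- fmap_comp. reflexivity.
  - intro x. unfold Tunfold1. rewrite fm_fold_eta. reflexivity.
  - intro s. rewrite fmap_id. reflexivity.
  - reflexivity.
Qed.

Lemma Tunfold1_iota X s : Tunfold1 T X (fm_iota T s) = inl s.
Proof.
  unfold Tunfold1 at 1. rewrite fm_fold_iota, <- fmap_comp. f_equal.
  rewrite <- (fmap_id S _ s) at 2. f_equal.
  apply functional_extensionality, Tfold1_unfold1.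
Qed.

Lemma Tunfold1_eta X x : Tunfold1 T X (fm_eta T x) = inr x.
Proof. apply fm_fold_eta. Qed.

Lemma T_cases X (t : T X) : (exists x, t = fm_eta T x) \/ (exists s, t = fm_iota T s).
Proof.
  rewrite <- (Tfold1_unfold1 X t). destruct (Tunfold1 T X t) as [s | x]; simpl; eauto.
Qed.

End FreeMonadLaws.

Section CofreeLaws.
Variables (B : Functor) (C : CofreeComonad B).

Lemma Cinf_theta X (f : X -> B X) x : cf_theta C (Cinf C f x) = fmap B (Cinf C f) (f x).
Proof. apply cf_unfold_theta. Qed.

Lemma Cinf_eps X (f : X -> B X) x : cf_eps C (Cinf C f x) = x.
Proof. apply cf_unfold_eps. Qed.

Lemma Cmap_theta X Y (h : X -> Y) t : cf_theta C (Cmap C h t) = fmap B (Cmap C h) (cf_theta C t).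
Proof. apply cf_unfold_theta. Qed.

Lemma Cmap_eps X Y (h : X -> Y) t : cf_eps C (Cmap C h t) = h (cf_eps C t).
Proof. apply cf_unfold_eps. Qed.

Lemma Cmap_id X (t : C X) : Cmap C (fun x : X => x) t = t.
Proof.
  symmetry. apply (cf_unfold_unique B C X (C X) _ (fun t => t)); intro; simpl.
  - rewrite fmap_id. reflexivity.
  - reflexivity.
Qed.

End CofreeLaws.

Lemma Rel_fmap (S : Functor) X Y (R : X -> Y -> Prop) A (u : A -> X) (v : A -> Y) :
  (forall a, R (u a) (v a)) -> forall s, Rel S R (fmap S u s) (fmap S v s).
Proof.
  intros uRv s.
  exists (fmap S (fun a => exist (fun p : X * Y => R (fst p) (snd p)) (u a, v a) (uRv a)) s).
  split; rewrite <- fmap_comp; reflexivity.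
Qed.

Section Similarity.
Variables (B : OrderedFunctor) (C : CofreeComonad B).

Lemma Csim_family X A (u v : A -> C X) :
  (forall a, cf_eps C (u a) = cf_eps C (v a)) ->
  (forall a, exists p : B A, ole B (cf_theta C (u a)) (fmap B u p) /\
                             ole B (fmap B v p) (cf_theta C (v a))) ->
  forall a, Csim C X (u a) (v a).
Proof.
  intros eps_uv step a.
  pose (R x y := exists a, x = u a /\ y = v a).
  exists R. split; [|exists a; auto].
  intros _ _ [a' [-> ->]]. destruct (step a') as [p [le_u le_v]].
  pose (pair_in_R a := exist (fun q => R (fst q) (snd q)) (u a, v a)
                              (ex_intro _ a (conj eq_refl eq_refl))).
  exists (fmap B u p, cf_eps C (u a')), (fmap B v p, cf_eps C (v a')).
  split; [split; simpl; auto|split].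
  - exists (fmap B pair_in_R p, cf_eps C (u a')).
    unfold prodmap; simpl. rewrite <- !fmap_comp, eps_uv. split; reflexivity.
  - split; simpl; auto.
Qed.

Lemma Cinf_lax Z W (k : Z -> W) (f : Z -> B Z) (g : W -> B W) :
  (forall z, ole B (fmap B k (f z)) (g (k z))) ->
  forall z, Csim C W (Cmap C k (Cinf C f z)) (Cinf C g (k z)).
Proof.
  intros fk_le. apply Csim_family.
  - intro z. rewrite Cmap_eps, !Cinf_eps. reflexivity.
  - intro z. exists (f z). rewrite Cmap_theta, !Cinf_theta. split.
    + rewrite <- fmap_comp. apply ole_refl.
    + rewrite (fmap_comp B _ _ _ k (Cinf C g)). apply fmap_mono, fk_le.
Qed.

Lemma Cinf_oplax Z W (k : Z -> W) (f : Z -> B Z) (g : W -> B W) :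
  (forall z, ole B (g (k z)) (fmap B k (f z))) ->
  forall z, Csim C W (Cinf C g (k z)) (Cmap C k (Cinf C f z)).
Proof.
  intros fk_ge. apply Csim_family.
  - intro z. rewrite Cmap_eps, !Cinf_eps. reflexivity.
  - intro z. exists (f z). rewrite Cmap_theta, !Cinf_theta. split.
    + rewrite (fmap_comp B _ _ _ k (Cinf C g)). apply fmap_mono, fk_ge.
    + rewrite <- fmap_comp. apply ole_refl.
Qed.

End Similarity.

Section Phi.
Variables (S : Functor) (T : FreeMonad S) (B : OrderedFunctor) (C : CofreeComonad B)
  (rho : forall X : Type, S (C X) -> B (T X)).

Lemma phi_eta X (c : X -> B X) f x :
  phi S T B C rho c f (fm_eta T x) = fmap B (fm_eta T) (c x).
Proof. unfold phi. rewrite Tunfold1_eta. reflexivity. Qed.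

Lemma phi_iota X (c : X -> B X) f s :
  phi S T B C rho c f (fm_iota T s) = fmap B (Tmu T X) (rho (T X) (fmap S (Cinf C f) s)).
Proof. unfold phi. rewrite Tunfold1_iota. reflexivity. Qed.

Hypothesis rho_mono : biGSOS_monotone S T B C rho.

Lemma mu_rho_mono X A (u v : A -> C (T X)) s :
  (forall a, Csim C (T X) (u a) (v a)) ->
  ole B (fmap B (Tmu T X) (rho (T X) (fmap S u s)))
        (fmap B (Tmu T X) (rho (T X) (fmap S v s))).
Proof. intros u_sim_v. apply fmap_mono, rho_mono, Rel_fmap, u_sim_v. Qed.

Lemma phi_mono X (c : X -> B X) (f g : T X -> B (T X)) :
  (forall t, ole B (f t) (g t)) -> forall t, ole B (phi S T B C rho c f t) (phi S T B C rho c g t).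
Proof.
  intros f_le_g t. destruct (T_cases S T X t) as [[x ->] | [s ->]].
  - rewrite !phi_eta. apply ole_refl.
  - rewrite !phi_iota. apply mu_rho_mono. intro t.
    rewrite <- (Cmap_id B C _ (Cinf C f t)).
    apply (Cinf_lax B C _ _ (fun t => t)). intro t'. rewrite fmap_id. apply f_le_g.
Qed.

Hypothesis HD : DCPObot_on_countable B.

Lemma phi_lfp_exists X (c : X -> B X) : countable (T X) -> exists s, is_lfp S T B C rho c s.
Proof.
  intros HTX.
  destruct (lfp_induction (pointwise_dcpo (T X) (obj_dcpo B HD (T X) HTX))
              (phi S T B C rho c) (fun _ => True)) as [m [Fm_le [le_Fm [_ m_least]]]]; auto.
  - exact (phi_mono X c).
  - exists m. split.
    + intro t. apply (ole_antisym B HD _ HTX); [apply Fm_le | apply le_Fm].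
    + intros g g_fix. apply m_least. intro t. rewrite g_fix. apply ole_refl.
Qed.

End Phi.

Section LfpCoalgebraMorphism.
Variables (S : Functor) (T : FreeMonad S) (B : OrderedFunctor) (C : CofreeComonad B)
  (rho : forall X : Type, S (C X) -> B (T X)).
Hypotheses (HD : DCPObot_on_countable B) (rho_natural : biGSOS_natural S T B C rho)
  (rho_mono : biGSOS_monotone S T B C rho).
Variables (X Y : Type) (HTX : countable (T X)) (HTY : countable (T Y))
  (c : X -> B X) (d : Y -> B Y) (k : T X -> T Y).
Hypothesis k_iota : forall s, k (fm_iota T s) = fm_iota T (fmap S k s).
Hypothesis k_mu : forall t, k (Tmu T X t) = Tmu T Y (Tmap T k t).
Variables (c_sharp : T X -> B (T X)) (d_sharp : T Y -> B (T Y)).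
Hypotheses (c_lfp : is_lfp S T B C rho c c_sharp) (d_lfp : is_lfp S T B C rho d d_sharp).
Hypothesis k_eta : forall x, fmap B k (fmap B (fm_eta T) (c x)) = d_sharp (k (fm_eta T x)).

Lemma fmap_phi_iota f s :
  fmap B k (phi S T B C rho c f (fm_iota T s)) =
  fmap B (Tmu T Y) (rho (T Y) (fmap S (fun t => Cmap C k (Cinf C f t)) s)).
Proof.
  rewrite phi_iota, <- fmap_comp.
  replace (fun a => k (Tmu T X a)) with (fun a => Tmu T Y (Tmap T k a))
    by (apply functional_extensionality; intro; symmetry; apply k_mu).
  rewrite fmap_comp, <- rho_natural, <- fmap_comp. reflexivity.
Qed.

Lemma phi_k_iota g s :
  phi S T B C rho d g (k (fm_iota T s)) =
  fmap B (Tmu T Y) (rho (T Y) (fmap S (fun t => Cinf C g (k t)) s)).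
Proof. rewrite k_iota, phi_iota, <- fmap_comp. reflexivity. Qed.

Lemma lfp_fmap_le t : ole B (fmap B k (c_sharp t)) (d_sharp (k t)).
Proof.
  destruct (lfp_induction (pointwise_dcpo (T X) (obj_dcpo B HD (T X) HTX))
              (phi S T B C rho c)
              (fun f => forall t, ole B (fmap B k (f t)) (d_sharp (k t))))
    as [m [Fm_le [m_le_Fm [m_le _]]]].
  - exact (phi_mono S T B C rho rho_mono X c).
  - intro t'. apply (fmap_obj_bot_le B HD _ _ HTX HTY).
  - intros f f_le t'. destruct (T_cases S T X t') as [[x ->] | [s ->]].
    + rewrite phi_eta, k_eta. apply ole_refl.
    + rewrite fmap_phi_iota, <- (proj1 d_lfp), phi_k_iota.
      apply (mu_rho_mono S T B C rho rho_mono). exact (Cinf_lax B C _ _ k f d_sharp f_le).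
  - intros D D_dir D_le t'. apply (fmap_obj_sup_le B HD _ _ HTX HTY).
    + apply (directed_at D), D_dir.
    + intros _ [f [Df ->]]. apply D_le, Df.
  - apply ole_trans with (fmap B k (m t)); [|apply m_le].
    apply fmap_mono. apply (proj2 c_lfp). intro t'.
    apply (ole_antisym B HD _ HTX); [apply Fm_le | apply m_le_Fm].
Qed.

Lemma lfp_fmap_ge t : ole B (d_sharp (k t)) (fmap B k (c_sharp t)).
Proof.
  pose (PX := pointwise_dcpo (T X) (obj_dcpo B HD (T X) HTX)).
  pose (PY := pointwise_dcpo (T Y) (obj_dcpo B HD (T Y) HTY)).
  destruct (lfp_induction (prod_dcpo PX PY)
              (fun p => (phi S T B C rho c (fst p), phi S T B C rho d (snd p)))
              (fun p => (forall u, ole B (snd p u) (d_sharp u)) /\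
                        (forall t, ole B (snd p (k t)) (fmap B k (fst p t)))))
    as [[m1 m2] [[_ Fm2_le] [[_ m2_le_Fm2] [[_ m_le] m_least]]]].
  - intros p q [pq1 pq2]. split.
    + exact (phi_mono S T B C rho rho_mono X c _ _ pq1).
    + exact (phi_mono S T B C rho rho_mono Y d _ _ pq2).
  - split; intros; apply obj_bot_le.
  - (* The bound by [d_sharp] handles generators [η x], whose image under k
       need not be a generator. *)
    intros [f1 f2] [f2_le f_le]; simpl in *.
    assert (Ff2_le : forall u, ole B (phi S T B C rho d f2 u) (d_sharp u)).
    { intro u. rewrite <- (proj1 d_lfp). apply phi_mono; auto. }
    split; [exact Ff2_le|].
    intro t'. destruct (T_cases S T X t') as [[x ->] | [s ->]].
    + rewrite phi_eta, k_eta. apply Ff2_le.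
    + rewrite phi_k_iota, fmap_phi_iota.
      apply (mu_rho_mono S T B C rho rho_mono). exact (Cinf_oplax B C _ _ k f1 f2 f_le).
  - intros D D_dir QD. split.
    + intro u. apply (pointwise_dsup_least _ _ (img snd D)); [apply directed_snd, D_dir|].
      intros _ [p [Dp ->]]. apply (proj1 (QD p Dp)).
    + intro t'. apply (pointwise_dsup_least _ _ (img snd D)); [apply directed_snd, D_dir|].
      intros _ [p [Dp ->]]. apply ole_trans with (fmap B k (fst p t')); [apply (proj2 (QD p Dp))|].
      apply fmap_mono. exact (proj1 (dsup_ub _ D p D_dir Dp) t').
  - simpl in *.
    assert (m2_fix : forall u, phi S T B C rho d m2 u = m2 u)
      by (intro u; apply (ole_antisym B HD _ HTY); [apply Fm2_le | apply m2_le_Fm2]).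
    assert (m1_le : forall t, ole B (m1 t) (c_sharp t)).
    { refine (proj1 (m_least (c_sharp, d_sharp) _)). split; intro u; simpl.
      - rewrite (proj1 c_lfp). apply ole_refl.
      - rewrite (proj1 d_lfp). apply ole_refl. }
    apply ole_trans with (m2 (k t)); [apply (proj2 d_lfp), m2_fix|].
    apply ole_trans with (fmap B k (m1 t)); [apply m_le | apply fmap_mono, m1_le].
Qed.

Lemma lfp_coalg_hom : coalg_hom B c_sharp d_sharp k.
Proof. intro t. apply (ole_antisym B HD _ HTY); [apply lfp_fmap_le | apply lfp_fmap_ge]. Qed.

End LfpCoalgebraMorphism.

Section LiftedMonad.
Variables (S : Functor) (T : FreeMonad S) (B : OrderedFunctor) (C : CofreeComonad B)
  (rho : forall X : Type, S (C X) -> B (T X)).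
Hypotheses (HD : DCPObot_on_countable B) (rho_natural : biGSOS_natural S T B C rho)
  (rho_mono : biGSOS_monotone S T B C rho).

Lemma eta_coalg_hom X (c : X -> B X) c_sharp :
  is_lfp S T B C rho c c_sharp -> coalg_hom B c c_sharp (fm_eta T).
Proof. intros [c_fix _] x. rewrite <- c_fix, phi_eta. reflexivity. Qed.

Lemma Tmap_coalg_hom X Y (c : X -> B X) (d : Y -> B Y) (h : X -> Y) c_sharp d_sharp :
  countable (T X) -> countable (T Y) ->
  is_lfp S T B C rho c c_sharp -> is_lfp S T B C rho d d_sharp ->
  coalg_hom B c d h -> coalg_hom B c_sharp d_sharp (Tmap T h).
Proof.
  intros HTX HTY c_lfp d_lfp h_hom.
  apply (lfp_coalg_hom S T B C rho HD rho_natural rho_mono X Y HTX HTY c d); auto.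
  - apply Tmap_iota.
  - apply Tmu_natural.
  - intro x. rewrite Tmap_eta, <- (eta_coalg_hom Y d d_sharp d_lfp), <- h_hom, <- !fmap_comp.
    f_equal. apply functional_extensionality. intro. apply Tmap_eta.
Qed.

Lemma Tmu_coalg_hom X (c : X -> B X) c_sharp cc_sharp :
  countable (T (T X)) -> countable (T X) ->
  is_lfp S T B C rho c c_sharp -> is_lfp S T B C rho c_sharp cc_sharp ->
  coalg_hom B cc_sharp c_sharp (Tmu T X).
Proof.
  intros HTTX HTX c_lfp cc_lfp.
  apply (lfp_coalg_hom S T B C rho HD rho_natural rho_mono (T X) X HTTX HTX c_sharp c); auto.
  - apply Tmu_iota.
  - apply Tmu_assoc.
  - intro t. rewrite Tmu_eta, <- fmap_comp.
    replace (fun a => Tmu T X (fm_eta T a)) with (fun a : T X => a)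
      by (apply functional_extensionality; intro; symmetry; apply Tmu_eta).
    apply fmap_id.
Qed.

End LiftedMonad.
Theorem mainTheorem11 (S : Functor) (T : FreeMonad S) (B : OrderedFunctor)
  (C : CofreeComonad B) (rho : forall X : Type, S (C X) -> B (T X)) :
  (forall X : Type, countable X -> countable (T X)) ->
  preserves_weak_pullbacks B ->
  DCPObot_on_countable B ->
  biGSOS_natural S T B C rho ->
  biGSOS_monotone S T B C rho ->
  (* the least fixed point c^# of φ_c exists *)
  (forall (X : Type) (c : X -> B X), countable X ->
     exists s : T X -> B (T X), is_lfp S T B C rho c s) /\
  (* and (Σ*X, c^#), Σ*h, η, μ form a monad on Coalg_c(B) lifting Σ*_c *)
  (forall sharp : forall X : Type, (X -> B X) -> T X -> B (T X),
     (forall (X : Type) (c : X -> B X), countable X -> is_lfp S T B C rho c (sharp X c)) ->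
     (* object part lands in Coalg_c(B) *)
     (forall X : Type, countable X -> countable (T X)) /\
     (* morphism part: Σ*h is a coalgebra morphism *)
     (forall (X Y : Type) (c : X -> B X) (d : Y -> B Y) (h : X -> Y),
        countable X -> countable Y -> coalg_hom B c d h ->
        coalg_hom B (sharp X c) (sharp Y d) (Tmap T h)) /\
     (* functor laws *)
     (forall (X : Type), countable X -> forall t : T X, Tmap T (fun x : X => x) t = t) /\
     (forall (X Y Z : Type) (h : X -> Y) (g : Y -> Z),
        countable X -> countable Y -> countable Z ->
        forall t : T X, Tmap T (fun x => g (h x)) t = Tmap T g (Tmap T h t)) /\
     (* unit: components are coalgebra morphisms, natural *)
     (forall (X : Type) (c : X -> B X), countable X ->
        coalg_hom B c (sharp X c) (fm_eta T)) /\
     (forall (X Y : Type) (h : X -> Y), countable X -> countable Y ->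
        forall x : X, Tmap T h (fm_eta T x) = fm_eta T (h x)) /\
     (* multiplication: components are coalgebra morphisms, natural *)
     (forall (X : Type) (c : X -> B X), countable X ->
        coalg_hom B (sharp (T X) (sharp X c)) (sharp X c) (Tmu T X)) /\
     (forall (X Y : Type) (h : X -> Y), countable X -> countable Y ->
        forall t : T (T X), Tmap T h (Tmu T X t) = Tmu T Y (Tmap T (Tmap T h) t)) /\
     (* monad laws *)
     (forall (X : Type), countable X ->
        forall t : T X, Tmu T X (fm_eta T t) = t) /\
     (forall (X : Type), countable X ->
        forall t : T X, Tmu T X (Tmap T (fm_eta T) t) = t) /\
     (forall (X : Type), countable X ->
        forall t : T (T (T X)), Tmu T X (Tmu T (T X) t) = Tmu T X (Tmap T (Tmu T X) t))).
Proof.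
  intros T_countable _ HD rho_natural rho_mono. split.
  - intros X c HX. exact (phi_lfp_exists S T B C rho rho_mono HD X c (T_countable X HX)).
  - intros sharp sharp_lfp.
    split; [exact T_countable|].
    split; [intros X Y c d h HX HY;
            exact (Tmap_coalg_hom S T B C rho HD rho_natural rho_mono X Y c d h _ _
                     (T_countable X HX) (T_countable Y HY) (sharp_lfp X c HX) (sharp_lfp Y d HY))|].
    split; [intros; apply Tmap_id|].
    split; [intros; apply Tmap_comp|].
    split; [intros X c HX; exact (eta_coalg_hom S T B C rho X c _ (sharp_lfp X c HX))|].
    split; [intros; apply Tmap_eta|].
    split; [intros X c HX;
            assert (HTX := T_countable X HX);
            exact (Tmu_coalg_hom S T B C rho HD rho_natural rho_mono X c _ _ (T_countable _ HTX) HTX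
                     (sharp_lfp X c HX) (sharp_lfp (T X) (sharp X c) HTX))|].
    split; [intros; apply Tmu_natural|].
    split; [intros; apply Tmu_eta|].
    split; [intros; apply Tmu_Tmap_eta|].
    intros; apply Tmu_assoc.
Qed.
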